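(* For all $m\in\mathbb{N}$: if $m$ is even, then $\frac{2^m}{3}-\frac{2^{2k}}{3}\in S_m$ for every integer $k$ with $0\leq k\leq\frac{m-4}{2}$; if $m$ is odd, then $\frac{2^m}{3}-\frac{2^{2k+1}}{3}\in S_m$ for every integer $k$ with $0\leq k\leq\frac{m-5}{2}$.
   Context: $\mathbb{N}=\{1,2,3,\dots\}$. The Collatz map $T:\mathbb{N}\to\mathbb{N}$ is $T(n)=\frac{3n+1}{2}$ if $n$ is odd and $T(n)=\frac{n}{2}$ if $n$ is even; $T^{(k)}$ denotes the $k$-fold composition. The total stopping time is $\sigma_\infty(1)=0$ and, for $n\geq 2$, $\sigma_\infty(n)=\inf\{k\in\mathbb{N}\cup\{\infty\} : T^{(k)}(n)=1\}$. Let $S_0=\{1\}$ and $S_k=\{n\in\mathbb{N}:\sigma_\infty(n)=k\}$ for $k\geq 1$. *)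

From mathcomp Require Import all_boot.
Set Implicit Arguments. Unset Strict Implicit. Unset Printing Implicit Defensive.

Definition collatzT (n : nat) : nat :=
  if odd n then (3 * n + 1)./2 else n./2.

(* n \in S_k, i.e. sigma_infty(n) = k, for n in N = {1,2,...}:
   - sigma_infty(1) = 0, so S_0 = {1};
   - for n >= 2, sigma_infty(n) = least k >= 1 with T^(k)(n) = 1
     (k = infty if none, in which case n lies in no S_k with k finite). *)
Definition in_S (k n : nat) : Prop :=
  (n = 1 /\ k = 0) \/
  (2 <= n /\ 1 <= k /\ iter k collatzT n = 1 /\
   forall j, 1 <= j < k -> iter j collatzT n <> 1).

From mathcomp Require Import all_boot.
From mathcomp Require Import zify.

Set Implicit Arguments.
Unset Strict Implicit.

(* Write (2^m - 2^j)/3 = 2^j a with 3a + 1 = 4^s, where m = j + 2s.  The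
   trajectory of 2^j a first halves j times down to a; since a is odd,
   T a = (3a + 1)/2 = 2^(2s-1), which is halved to 1 in 2s - 1 more steps.
   Every earlier iterate is either 2^i a with a > 1 or a power of 2 above 1,
   so 1 is reached for the first time after exactly j + 2s = m steps. *)

Lemma collatzT_double y : collatzT (2 * y) = y.
Proof. by rewrite /collatzT mul2n odd_double doubleK. Qed.

Lemma iter_collatzT_pow2 t y : iter t collatzT (2 ^ t * y) = y.
Proof.
elim: t y => [|t IH] y /=; first by rewrite mul1n.
by rewrite -/(iter t.+1 _ _) iterSr expnS -mulnA collatzT_double IH.
Qed.

Lemma iter_collatzT_pow2_le t p y :
  t <= p -> iter t collatzT (2 ^ p * y) = 2 ^ (p - t) * y.
Proof.
move=> le_tp; rewrite -(subnKC le_tp) expnD -mulnA iter_collatzT_pow2.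
by rewrite addKn.
Qed.

Lemma collatzT_odd_pow2 a r : 3 * a + 1 = 2 ^ r.+1 -> collatzT a = 2 ^ r.
Proof.
move=> ha; have odd_a : odd a.
  apply/negPn/negP=> even_a.
  have : odd (2 ^ r.+1) by rewrite -ha oddD oddM /= (negbTE even_a).
  by rewrite oddX.
by rewrite /collatzT odd_a ha expnS mul2n doubleK.
Qed.

Lemma iter_collatzT_after_odd a r j u : 3 * a + 1 = 2 ^ r.+1 -> u <= r ->
  iter (j + u.+1) collatzT (2 ^ j * a) = 2 ^ (r - u).
Proof.
move=> ha le_ur.
rewrite addnC iterD iter_collatzT_pow2 iterSr (collatzT_odd_pow2 ha).
by rewrite -[2 ^ r]muln1 iter_collatzT_pow2_le // muln1.
Qed.

Lemma in_S_pow2_mul a r j : 1 < a -> 3 * a + 1 = 2 ^ r.+1 ->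
  in_S (j + r.+1) (2 ^ j * a).
Proof.
move=> a_gt1 ha; right; split; first by have := expn_gt0 2 j; nia.
split; first by lia.
split; first by rewrite (iter_collatzT_after_odd j ha (leqnn r)) subnn.
move=> t /andP[t_gt0 t_lt].
case: (leqP t j) => [le_tj | lt_jt].
  by rewrite iter_collatzT_pow2_le //; have := expn_gt0 2 (j - t); nia.
have -> : t = j + (t - j).-1.+1 by lia.
rewrite (iter_collatzT_after_odd j ha); last by lia.
have -> : r - (t - j).-1 = (r - (t - j)).+1 by lia.
by rewrite expnS; have := expn_gt0 2 (r - (t - j)); lia.
Qed.

Lemma exists_pow4_mod3 s : exists a, 3 * a + 1 = 2 ^ (2 * s).
Proof.
elim: s => [|s [a ha]]; first by exists 0.
by exists (4 * a + 1); rewrite mulnS expnD -ha; lia.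
Qed.

Lemma in_S_pow2_sub_div3 m j s : j + 2 * s = m -> 2 <= s ->
  in_S m ((2 ^ m - 2 ^ j) %/ 3).
Proof.
move=> hm s_ge2; have [a ha] := exists_pow4_mod3 s.
have -> : 2 ^ m - 2 ^ j = 3 * (2 ^ j * a).
  by rewrite -hm expnD -ha mulnDr muln1 mulnCA addnK.
have a_gt1 : 1 < a.
  have : 2 ^ 4 <= 2 ^ (2 * s) by rewrite leq_exp2l //; lia.
  by rewrite -ha /=; lia.
rewrite mulKn // (_ : m = j + (2 * s).-1.+1); last by lia.
by apply: in_S_pow2_mul; rewrite // prednK //; lia.
Qed.

Theorem mainTheorem5 (m : nat) : 1 <= m ->
  (~~ odd m -> forall k : nat, 2 * k + 4 <= m ->
      in_S m ((2 ^ m - 2 ^ (2 * k)) %/ 3)) /\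
  (odd m -> forall k : nat, 2 * k + 5 <= m ->
      in_S m ((2 ^ m - 2 ^ (2 * k + 1)) %/ 3)).
Proof.
move=> _; have hm := odd_double_half m.
split=> om k hk; apply: (@in_S_pow2_sub_div3 _ _ (m./2 - k)).
- by move: hm; rewrite (negbTE om); lia.
- by lia.
- by move: hm; rewrite om; lia.
- by lia.
Qed.
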